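(* Consider the asynchronous Sinkhorn iteration described in the context, started from any $v^{(0)}\in\mathbb R_{++}^Y$. Then: (i) $u^{(\ell)}$ and $\alpha^{(\ell)}=\varepsilon\log u^{(\ell)}$ are (componentwise) nondecreasing in $\ell$, $v^{(\ell)}$ and $\beta^{(\ell)}=\varepsilon\log v^{(\ell)}$ are nonincreasing in $\ell$, and $q^{(\ell)}$ is nondecreasing in $\ell$; (ii) for every $\ell\ge1$, $\sum_y\pi^{(\ell)}(x,y)\le\mu(x)$ for all $x$ and $\sum_x\pi^{(\ell)}(x,y)\le\nu(y)$ for all $y$; (iii) there exists $y^*\in Y$ with $v^{(\ell)}(y^* )=v^{(0)}(y^* )$ for all $\ell$.
   Context: $X,Y$ finite sets, $\mu\in\mathcal P(X)$, $\nu\in\mathcal P(Y)$ with strictly positive entries, $c\in\mathbb R_+^{X\times Y}$, $\varepsilon>0$, and kernel $K(x,y)=\exp(-c(x,y)/\varepsilon)\mu(x)\nu(y)$. The asynchronous Sinkhorn iteration: given $v^{(0)}\in\mathbb R_{++}^Y$, for $\ell\ge0$ set $u^{(\ell+1)}=\mu\oslash(Kv^{(\ell)})$, $\hat v^{(\ell+1)}=\nu\oslash(K^\top u^{(\ell+1)})$, $v^{(\ell+1)}=\min\{v^{(\ell)},\hat v^{(\ell+1)}\}$ (componentwise minimum), $\pi^{(\ell+1)}=\mathrm{diag}(u^{(\ell+1)})K\mathrm{diag}(v^{(\ell+1)})$, $q^{(\ell+1)}=\sum_{x,y}\pi^{(\ell+1)}(x,y)$. Here $\oslash$ is componentwise division.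 *)

From HB Require Import structures.
From mathcomp Require Import all_boot all_order all_algebra.
From mathcomp Require Import all_classical all_reals all_analysis.
Set Implicit Arguments. Unset Strict Implicit. Unset Printing Implicit Defensive.
Import Order.TTheory GRing.Theory Num.Theory.
Local Open Scope ring_scope.

Section Sinkhorn.
Variables (R : realType) (X Y : finType).
Variables (mu : X -> R) (nu : Y -> R) (c : X -> Y -> R) (eps : R).

Definition kernel (x : X) (y : Y) : R := expR (- c x y / eps) * mu x * nu y.

Definition u_of (v : Y -> R) : X -> R :=
  fun x => mu x / \sum_(y : Y) kernel x y * v y.

Definition vhat_of (u : X -> R) : Y -> R :=
  fun y => nu y / \sum_(x : X) kernel x y * u x.

Variable v0 : Y -> R.

Fixpoint async_v (l : nat) : Y -> R :=
  match l with
  | 0 => v0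
  | l'.+1 => fun y => Num.min (async_v l' y) (vhat_of (u_of (async_v l')) y)
  end.

(* u^(l) for l >= 1: u^(l) = mu ./ (K v^(l-1)); async_u 0 is meaningless *)
Definition async_u (l : nat) : X -> R := u_of (async_v l.-1).

Definition async_pi (l : nat) (x : X) (y : Y) : R :=
  async_u l x * kernel x y * async_v l y.

Definition async_q (l : nat) : R := \sum_(x : X) \sum_(y : Y) async_pi l x y.

End Sinkhorn.

From Pilot Require Import Defs.
From HB Require Import structures.
From mathcomp Require Import all_boot all_order all_algebra.
From mathcomp Require Import all_classical all_reals all_analysis.
Import Order.TTheory GRing.Theory Num.Theory.
Set Implicit Arguments. Unset Strict Implicit. Unset Printing Implicit Defensive.
Local Open Scope ring_scope.

(* u = mu ./ (K v) is antitone in v and vhat = nu ./ (K^T u) is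
   antitone in u, so the decrease of v (forced by the min) makes u increase.
   Once a coordinate v(y) has left v0(y), it equals vhat(y): the column y is
   saturated, and it stays so because vhat only decreases.  If at some step all
   coordinates had moved, the total mass would be sum nu = sum mu, while every
   row marginal is strictly below mu, as the coordinate that was still at v0
   has strictly decreased.  So each v^(l) keeps some coordinate at v0; these
   coordinate sets decrease with l, and a decreasing sequence of nonempty
   subsets of a finite set has a common element. *)

Lemma inhabited_of_sum_neq0 (R : nmodType) (T : finType) (F : T -> R) :
  \sum_(i : T) F i != 0 -> inhabited T.
Proof.
case: (pickP T) => [i _ _ | T0]; first exact: inhabits.
by rewrite big_pred0 ?eqxx.
Qed.

Lemma sumr_gt0 (R : numDomainType) (T : finType) (i0 : T) (F : T -> R) :
  (forall i, 0 < F i) -> 0 < \sum_(i : T) F i.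
Proof.
move=> F_gt0; rewrite (bigD1 i0) //= ltr_pwDl // sumr_ge0 // => i _.
exact: ltW.
Qed.

Lemma antitone_nonempty_common (T : finType) (P : nat -> T -> Prop) :
  (forall l i, P l.+1 i -> P l i) -> (forall l, exists i, P l i) ->
  exists i, forall l, P l i.
Proof.
move=> P_antitone P_nonempty; apply: contrapT => /forallNP no_common.
have /choice[leave leaveP] : forall i, exists l, ~ P l i.
  by move=> i; apply/existsNP; exact: no_common.
have P_down k n i : (k <= n)%N -> P n i -> P k i.
  elim: n => [|n IHn]; first by rewrite leqn0 => /eqP->.
  by rewrite leq_eqVlt ltnS => /predU1P[-> // | /IHn down] /P_antitone.
have [i Pi] := P_nonempty (\max_(j : T) leave j)%N.
exact/(leaveP i)/(P_down _ _ _ (leq_bigmax i)).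
Qed.

Lemma ler_pM_ln (R : realType) (eps a b : R) :
  0 <= eps -> 0 < a -> a <= b -> eps * ln a <= eps * ln b.
Proof.
move=> eps_ge0 a_gt0 a_le_b.
apply: ler_wpM2l => //.
by rewrite ler_ln ?posrE // (lt_le_trans a_gt0).
Qed.

Section AsyncSinkhorn.
Variables (R : realType) (X Y : finType).
Variables (mu : X -> R) (nu : Y -> R) (c : X -> Y -> R) (eps : R) (v0 : Y -> R).
Hypotheses (mu_gt0 : forall x, 0 < mu x) (nu_gt0 : forall y, 0 < nu y).
Hypothesis v0_gt0 : forall y, 0 < v0 y.
Variables (x0 : X) (y0 : Y).

Local Notation K := (Defs.kernel mu nu c eps).
Local Notation uof := (u_of mu nu c eps).
Local Notation vhat := (vhat_of mu nu c eps).
Local Notation v := (async_v mu nu c eps v0).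
Local Notation pi := (async_pi mu nu c eps v0).
Local Notation Kv w x := (\sum_(y : Y) K x y * w y).
Local Notation KTu w y := (\sum_(x : X) K x y * w x).

Lemma kernel_gt0 x y : 0 < K x y.
Proof. by rewrite /Defs.kernel !mulr_gt0 ?expR_gt0. Qed.

Lemma Kv_gt0 w : (forall y, 0 < w y) -> forall x, 0 < Kv w x.
Proof. by move=> w_gt0 x; apply: (sumr_gt0 y0) => y; rewrite mulr_gt0 ?kernel_gt0. Qed.

Lemma KTu_gt0 w : (forall x, 0 < w x) -> forall y, 0 < KTu w y.
Proof. by move=> w_gt0 y; apply: (sumr_gt0 x0) => x; rewrite mulr_gt0 ?kernel_gt0. Qed.

Lemma ler_Kv w1 w2 : (forall y, w1 y <= w2 y) -> forall x, Kv w1 x <= Kv w2 x.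
Proof. by move=> le_w x; apply: ler_sum => y _; rewrite ler_pM2l ?kernel_gt0. Qed.

Lemma ler_KTu w1 w2 : (forall x, w1 x <= w2 x) -> forall y, KTu w1 y <= KTu w2 y.
Proof. by move=> le_w y; apply: ler_sum => x _; rewrite ler_pM2l ?kernel_gt0. Qed.

Lemma u_of_gt0 w : (forall y, 0 < w y) -> forall x, 0 < uof w x.
Proof. by move=> w_gt0 x; rewrite divr_gt0 ?Kv_gt0. Qed.

Lemma vhat_of_gt0 w : (forall x, 0 < w x) -> forall y, 0 < vhat w y.
Proof. by move=> w_gt0 y; rewrite divr_gt0 ?KTu_gt0. Qed.

Lemma u_ofK w : (forall y, 0 < w y) -> forall x, uof w x * Kv w x = mu x.
Proof. by move=> w_gt0 x; rewrite divfK // gt_eqF ?Kv_gt0. Qed.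

Lemma vhat_ofK w : (forall x, 0 < w x) -> forall y, vhat w y * KTu w y = nu y.
Proof. by move=> w_gt0 y; rewrite divfK // gt_eqF ?KTu_gt0. Qed.

Lemma u_of_antitone w1 w2 : (forall y, 0 < w1 y) -> (forall y, w1 y <= w2 y) ->
  forall x, uof w2 x <= uof w1 x.
Proof.
move=> w1_gt0 le_w x; have w2_gt0 y := lt_le_trans (w1_gt0 y) (le_w y).
by rewrite ler_pM2l // lef_pV2 ?posrE ?Kv_gt0 ?ler_Kv.
Qed.

Lemma vhat_of_antitone w1 w2 : (forall x, 0 < w1 x) -> (forall x, w1 x <= w2 x) ->
  forall y, vhat w2 y <= vhat w1 y.
Proof.
move=> w1_gt0 le_w y; have w2_gt0 x := lt_le_trans (w1_gt0 x) (le_w x).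
by rewrite ler_pM2l // lef_pV2 ?posrE ?KTu_gt0 ?ler_KTu.
Qed.

Lemma async_vS l y : v l.+1 y = Num.min (v l y) (vhat (uof (v l)) y).
Proof. by []. Qed.

Lemma async_v_gt0 l y : 0 < v l y.
Proof.
elim: l y => [|l IHl] y //.
by rewrite async_vS lt_min IHl vhat_of_gt0 // => x; apply: u_of_gt0.
Qed.

Lemma async_u_gt0 l x : 0 < uof (v l) x.
Proof. exact/u_of_gt0/async_v_gt0. Qed.

Lemma async_v_le_prev l y : v l.+1 y <= v l y.
Proof. by rewrite async_vS ge_min lexx. Qed.

Lemma async_v_le_vhat l y : v l.+1 y <= vhat (uof (v l)) y.
Proof. by rewrite async_vS ge_min lexx orbT. Qed.

Lemma async_v_antitone k l y : (k <= l)%N -> v l y <= v k y.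
Proof. exact: (Order.NatMonotonyTheory.nonincnP (async_v_le_prev^~ y)). Qed.

Lemma async_v_fixed_prev l y : v l.+1 y = v0 y -> v l y = v0 y.
Proof.
move=> fixed; apply: le_anti; rewrite (async_v_antitone _ (leq0n l)) /=.
by rewrite -[X in X <= _]fixed async_v_le_prev.
Qed.

Lemma async_u_le_next l x : uof (v l) x <= uof (v l.+1) x.
Proof. exact/u_of_antitone/async_v_le_prev/async_v_gt0. Qed.

Lemma async_pi_row l x : \sum_(y : Y) pi l.+1 x y = uof (v l) x * Kv (v l.+1) x.
Proof. by rewrite mulr_sumr; apply: eq_bigr => y _; rewrite /async_pi mulrA. Qed.

Lemma async_pi_col l y : \sum_(x : X) pi l.+1 x y = KTu (uof (v l)) y * v l.+1 y.
Proof.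
by rewrite mulr_suml; apply: eq_bigr => x _; rewrite /async_pi [_ * K x y]mulrC.
Qed.

Lemma async_pi_row_le l x : \sum_(y : Y) pi l.+1 x y <= mu x.
Proof.
rewrite async_pi_row -(u_ofK (@async_v_gt0 l) x).
by rewrite ler_pM2l ?async_u_gt0 // ler_Kv // => y; apply: async_v_le_prev.
Qed.

Lemma async_pi_col_le l y : \sum_(x : X) pi l.+1 x y <= nu y.
Proof.
rewrite async_pi_col -(vhat_ofK (@async_u_gt0 l) y) mulrC.
by rewrite ler_pM2r ?KTu_gt0 ?async_v_le_vhat // => x; apply: async_u_gt0.
Qed.

Lemma async_pi_col_le_next l y :
  \sum_(x : X) pi l.+1 x y <= \sum_(x : X) pi l.+2 x y.
Proof.
rewrite [in X in _ <= X]async_pi_col async_vS.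
case: (leP (v l.+1 y) (vhat (uof (v l.+1)) y)) => _.
  rewrite async_pi_col ler_pM2r ?async_v_gt0 // ler_KTu // => x.
  exact: async_u_le_next.
by rewrite mulrC vhat_ofK ?async_pi_col_le // => x; apply: async_u_gt0.
Qed.

Lemma ltr_Kv w1 w2 y1 : (forall y, w1 y <= w2 y) -> w1 y1 < w2 y1 ->
  forall x, Kv w1 x < Kv w2 x.
Proof.
move=> le_w lt_w1 x; rewrite (bigD1 y1) //= [ltRHS](bigD1 y1) //=.
rewrite ltr_leD ?ltr_pM2l ?kernel_gt0 //.
by apply: ler_sum => y _; rewrite ler_pM2l ?kernel_gt0.
Qed.

Lemma async_pi_row_lt l y1 x : v l.+1 y1 < v l y1 -> \sum_(y : Y) pi l.+1 x y < mu x.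
Proof.
move=> lt_v1; rewrite async_pi_row -(u_ofK (@async_v_gt0 l) x).
by rewrite ltr_pM2l ?async_u_gt0 // (ltr_Kv _ lt_v1) // => y; apply: async_v_le_prev.
Qed.

(* Once the min has selected [vhat] it keeps doing so, as [vhat] only decreases. *)
Lemma async_v_moved l y : v l.+1 y != v0 y -> v l.+1 y = vhat (uof (v l)) y.
Proof.
elim: l => [|l IHl]; rewrite async_vS.
  by case: leP => // _; rewrite eqxx.
case: (eqVneq (v l.+1 y) (v0 y)) => [-> | /IHl moved_before _].
  by case: leP => // _; rewrite eqxx.
rewrite min_r // moved_before vhat_of_antitone // => x.
  exact: async_u_gt0.
exact: async_u_le_next.
Qed.

Lemma async_pi_col_moved l y : v l.+1 y != v0 y -> \sum_(x : X) pi l.+1 x y = nu y.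
Proof.
by move=> /async_v_moved moved; rewrite async_pi_col moved mulrC vhat_ofK // => x;
  apply: async_u_gt0.
Qed.

Hypothesis mass_balance : \sum_(x : X) mu x = \sum_(y : Y) nu y.

Lemma async_v_fixed_exists l : exists y, v l y = v0 y.
Proof.
elim: l => [|l [y1 fixed_y1]]; first by exists y0.
apply: contrapT => /forallNP all_moved.
have total_nu : \sum_(y : Y) \sum_(x : X) pi l.+1 x y = \sum_(y : Y) nu y.
  by apply: eq_bigr => y _; apply/async_pi_col_moved/eqP/all_moved.
have lt_y1 : v l.+1 y1 < v l y1.
  by rewrite lt_neqAle async_v_le_prev fixed_y1 andbT; apply/eqP/all_moved.
have : \sum_(x : X) \sum_(y : Y) pi l.+1 x y < \sum_(x : X) mu x.
  by apply: ltr_sum => [|x _]; [apply/hasP; exists x0 | exact: async_pi_row_lt lt_y1].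
by rewrite exchange_big total_nu mass_balance ltxx.
Qed.

End AsyncSinkhorn.

Theorem mainTheorem3 (R : realType) (X Y : finType)
  (mu : X -> R) (nu : Y -> R) (c : X -> Y -> R) (eps : R) (v0 : Y -> R)
  (hmu_pos : forall x, 0 < mu x) (hmu_sum : \sum_(x : X) mu x = 1)
  (hnu_pos : forall y, 0 < nu y) (hnu_sum : \sum_(y : Y) nu y = 1)
  (hc : forall x y, 0 <= c x y) (heps : 0 < eps)
  (hv0 : forall y, 0 < v0 y) :
  let u := async_u mu nu c eps v0 in
  let v := async_v mu nu c eps v0 in
  let pi := async_pi mu nu c eps v0 in
  let q := async_q mu nu c eps v0 in
  (* (i) monotonicity *)
  ((forall l, (1 <= l)%N -> forall x,
      u l x <= u l.+1 x /\ eps * ln (u l x) <= eps * ln (u l.+1 x)) /\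
   (forall l y, v l.+1 y <= v l y /\ eps * ln (v l.+1 y) <= eps * ln (v l y)) /\
   (forall l, (1 <= l)%N -> q l <= q l.+1)) /\
  (* (ii) marginal constraints *)
  (forall l, (1 <= l)%N ->
     (forall x, \sum_(y : Y) pi l x y <= mu x) /\
     (forall y, \sum_(x : X) pi l x y <= nu y)) /\
  (* (iii) a coordinate of v never moves *)
  (exists ystar : Y, forall l, v l ystar = v0 ystar).
Proof.
move=> u v pi q.
have [x0] : inhabited X by apply: (@inhabited_of_sum_neq0 _ _ mu); rewrite hmu_sum oner_eq0.
have [y0] : inhabited Y by apply: (@inhabited_of_sum_neq0 _ _ nu); rewrite hnu_sum oner_eq0.
have mass_balance : \sum_(x : X) mu x = \sum_(y : Y) nu y by rewrite hmu_sum hnu_sum.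
split; [split; [|split] | split].
- case=> [//|l] _ x; have u_le : u l.+1 x <= u l.+2 x by apply: async_u_le_next.
  by split=> //; apply: (ler_pM_ln (ltW heps) _ u_le); apply: async_u_gt0.
- move=> l y; have v_le : v l.+1 y <= v l y by apply: async_v_le_prev.
  by split=> //; apply: (ler_pM_ln (ltW heps) _ v_le); apply: async_v_gt0.
- case=> [//|l] _; rewrite /q /async_q exchange_big [leRHS]exchange_big.
  by apply: ler_sum => y _; apply: async_pi_col_le_next.
- by case=> [//|l] _; split=> [x|y]; [apply: async_pi_row_le | apply: async_pi_col_le].
apply: antitone_nonempty_common => [l y|l]; first exact: async_v_fixed_prev.
exact: async_v_fixed_exists.
Qed.
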